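(* Let $f\in C_b(\Omega\times\mathcal{R})$ and $t\in(0,1)$. Let $(\hat\pi_1,\phi_1)$ and $(\hat\pi_2,\phi_2)$ be pairs where each $\hat\pi_i$ is an environment kernel and $\phi_i$ is a probability density with respect to $\mathbb{P}$ such that $\phi_i\,\mathrm{d}\mathbb{P}$ is $\hat\pi_i$-invariant. Define $\gamma:=\frac{t\phi_1}{t\phi_1+(1-t)\phi_2}$, $\phi_3:=t\phi_1+(1-t)\phi_2$ and $\hat\pi_3:=\gamma\hat\pi_1+(1-\gamma)\hat\pi_2$. Then $\phi_3\,\mathrm{d}\mathbb{P}$ is $\hat\pi_3$-invariant and $H_f(\hat\pi_3,\phi_3)\ge tH_f(\hat\pi_1,\phi_1)+(1-t)H_f(\hat\pi_2,\phi_2)$.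
   Context: Let $d,B\ge1$, $\mathcal{R}:=\{z\in\mathbb{Z}^d:0<|z_1|+\cdots+|z_d|\le B\}$. An environment is $\omega=(\omega_x)_{x\in\mathbb{Z}^d}$ with $\omega_x=(\pi(x,x+z))_{z\in\mathcal{R}}$ a probability vector; $\Omega$ is the environment space, $(T_z\omega)_x=\omega_{x+z}$, $\mathbb{P}$ a probability on $\Omega$ stationary and ergodic under shifts. An environment kernel is a measurable $\hat\pi:\Omega\times\mathcal{R}\to[0,\infty)$ with $\sum_z\hat\pi(\cdot,z)=1$ $\mathbb{P}$-a.s. For a probability density $\phi$ w.r.t. $\mathbb{P}$, $\phi\,\mathrm{d}\mathbb{P}$ is $\hat\pi$-invariant if $\phi(\omega)=\sum_{z\in\mathcal{R}}\phi(T_{-z}\omega)\hat\pi(T_{-z}\omega,z)$ for $\mathbb{P}$-a.e. $\omega$. For $f\in C_b(\Omega\times\mathcal{R})$, $H_f(\hat\pi,\phi):=\int\sum_{z\in\mathcal{R}}\hat\pi(\omega,z)\left(f(\omega,z)-\log\frac{\hat\pi(\omega,z)}{\pi(0,z)}\right)\phi(\omega)\,\mathrm{d}\mathbb{P}(\omega)$. *)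

From HB Require Import structures.
From mathcomp Require Import all_boot all_order all_algebra.
From mathcomp Require Import all_classical all_reals all_analysis.
Set Implicit Arguments. Unset Strict Implicit. Unset Printing Implicit Defensive.
Import Order.TTheory GRing.Theory Num.Theory.
Import numFieldNormedType.Exports.
Local Open Scope classical_set_scope.
Local Open Scope ring_scope.

(** Z^d is represented by row vectors ['rV[int]_d].
    The finite step set R = {z in Z^d : 0 < |z_1|+...+|z_d| <= B} is
    represented by the finite type [step d B]: functions
    f : 'I_d -> 'I_(2B+1) encoding the vector (f i - B)_i, restricted to
    those whose l^1 norm lies in (0, B]. *)

Definition stepcoord (d B : nat) (f : {ffun 'I_d -> 'I_(2 * B).+1}) : 'rV[int]_d :=
  \row_i ((f i : nat)%:Z - B%:Z).

Definition norm1 (d : nat) (z : 'rV[int]_d) : nat := (\sum_(i < d) `|z ord0 i|)%N.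

Definition in_steps (d B : nat) (f : {ffun 'I_d -> 'I_(2 * B).+1}) : bool :=
  (0 < norm1 (stepcoord f))%N && (norm1 (stepcoord f) <= B)%N.

Definition step (d B : nat) := {f : {ffun 'I_d -> 'I_(2 * B).+1} | in_steps f}.

Definition stepv (d B : nat) (z : step d B) : 'rV[int]_d := stepcoord (val z).

(** Ambient environment space: all w : Z^d -> R -> real, w x z = pi(x, x+z),
    with the product (pointwise) topology, and its Borel sigma-algebra
    (which coincides with the product sigma-algebra here). *)
Notation envT R d B := {ptws 'rV[int]_d -> {ptws step d B -> R}}.

Definition env (R : realType) (d B : nat) :=
  g_sigma_algebraType (@open (envT R d B)).

Definition OmegaSet (R : realType) (d B : nat) : set (env R d B) :=
  [set w | forall x : 'rV[int]_d,
     (forall z : step d B, 0 <= w x z) /\ \sum_(z : step d B) w x z = 1].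

Definition shift (R : realType) (d B : nat) (v : 'rV[int]_d) (w : env R d B)
  : env R d B := fun x => w (x + v).

Definition stationary (R : realType) (d B : nat) (P : probability (env R d B) R) :=
  forall (v : 'rV[int]_d) (A : set (env R d B)),
    measurable A -> P (shift v @^-1` A) = P A.

Definition ergodic (R : realType) (d B : nat) (P : probability (env R d B) R) :=
  forall A : set (env R d B), measurable A ->
    (forall v : 'rV[int]_d, shift v @^-1` A = A) -> P A = 0%E \/ P A = 1%E.

(** Bounded continuous functions on Omega x R (R finite and discrete). *)
Definition Cb (R : realType) (d B : nat) (f : env R d B -> step d B -> R) :=
  forall z : step d B,
    {within (@OmegaSet R d B : set (envT R d B)), continuous (fun w : envT R d B => f w z)} /\
    exists M : R, forall w, @OmegaSet R d B w -> `|f w z| <= M.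

Definition env_kernel (R : realType) (d B : nat) (P : probability (env R d B) R)
  (pih : env R d B -> step d B -> R) :=
  [/\ forall z : step d B, measurable_fun setT (fun w => pih w z),
      forall w z, 0 <= pih w z &
      {ae P, forall w, \sum_(z : step d B) pih w z = 1}].

Definition prob_density (R : realType) (d B : nat) (P : probability (env R d B) R)
  (phi : env R d B -> R) :=
  [/\ measurable_fun setT phi, forall w, 0 <= phi w &
      (\int[P]_w (phi w)%:E = 1)%E].

Definition pihat_invariant (R : realType) (d B : nat) (P : probability (env R d B) R)
  (pih : env R d B -> step d B -> R) (phi : env R d B -> R) :=
  {ae P, forall w, phi w =
     \sum_(z : step d B) phi (shift (- stepv z) w) * pih (shift (- stepv z) w) z}.

Definition relent (R : realType) (a p : R) : \bar R :=
  if a == 0 then 0%E else if p == 0 then +oo%E else (a * ln (a / p))%:E.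

(** H_f(pih, phi) = int sum_z pih(w,z) (f(w,z) - log (pih(w,z)/pi(0,z))) phi(w) dP,
    with pi(0,z) = w_0(z). *)
Definition Hf (R : realType) (d B : nat) (P : probability (env R d B) R)
  (f : env R d B -> step d B -> R)
  (pih : env R d B -> step d B -> R) (phi : env R d B -> R) : \bar R :=
  (\int[P]_w ((\sum_(z : step d B)
       ((pih w z * f w z)%:E - relent (pih w z) (w (0%R : 'rV[int]_d) z))) * (phi w)%:E))%E.

(* Pointwise in the environment, gamma phi3 = t phi1 and (1 - gamma) phi3 = (1 - t) phi2, so
   phi3 pih3 = t phi1 pih1 + (1 - t) phi2 pih2: this gives the invariance of the mixture and
   writes the integrand of H_f(pih3, phi3) as phi3 times a gamma-convex combination. As
   a |-> a log (a / p) is convex (tangent-line inequality for ln), this integrand dominates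
   t times that of H_f(pih1, phi1) plus (1 - t) times that of H_f(pih2, phi2). An integrand
   is -oo exactly where phi > 0 and pih charges a step z with pi(0, z) = 0; for the mixture
   this happens only where it already does for pih1 or pih2. Since the integrals may be
   infinite, the pointwise inequality is integrated separately on positive and negative
   parts; f is only continuous on Omega, so measurability is argued on Omega, which has full
   measure. *)

From HB Require Import structures.
From mathcomp Require Import all_boot all_order all_algebra.
From mathcomp Require Import all_classical all_reals all_analysis.
From mathcomp Require Import measurable_realfun.
From mathcomp Require Import ring lra.
Set Implicit Arguments. Unset Strict Implicit. Unset Printing Implicit Defensive.
Import Order.TTheory GRing.Theory Num.Theory.
Import numFieldNormedType.Exports.
Local Open Scope classical_set_scope.
Local Open Scope ring_scope.

Section convex_combination_posneg.
Context (R : realType).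

Lemma le_mix_posnegr (t a b c : R) : 0 < t < 1 -> t * a + (1 - t) * b <= c ->
  Num.max (- c) 0 <= t * Num.max (- a) 0 + (1 - t) * Num.max (- b) 0 /\
  t * Num.max a 0 + (1 - t) * Num.max b 0 + Num.max (- c) 0 <=
    Num.max c 0 + (t * Num.max (- a) 0 + (1 - t) * Num.max (- b) 0).
Proof.
move=> /andP[t0 t1] abc.
have maxE (x : R) : Num.max x 0 = if 0 <= x then x else 0 by case: lerP.
have maxNE (x : R) : Num.max (- x) 0 = if 0 <= x then 0 else - x.
  by rewrite maxE oppr_ge0; case: (lerP 0 x) => x0; case: lerP => //; lra.
rewrite !maxNE !maxE.
by case: (lerP 0 a); case: (lerP 0 b); case: (lerP 0 c); split; nra.
Qed.

Local Open Scope ereal_scope.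

Lemma le_mix_posneg (t : R) (a b c : \bar R) : (0 < t < 1)%R ->
  a != +oo -> b != +oo -> c != +oo -> t%:E * a + (1 - t)%:E * b <= c ->
  maxe (- c) 0 <= t%:E * maxe (- a) 0 + (1 - t)%:E * maxe (- b) 0 /\
  t%:E * maxe a 0 + (1 - t)%:E * maxe b 0 + maxe (- c) 0 <=
    maxe c 0 + (t%:E * maxe (- a) 0 + (1 - t)%:E * maxe (- b) 0).
Proof.
move=> ht; have /andP[t0 t1] := ht.
have t1' : (0 < 1 - t)%R by rewrite subr_gt0.
have max_ge0 (x : \bar R) : 0 <= maxe x 0 by rewrite le_max lexx orbT.
have scale_ge0 (k : R) x : (0 < k)%R -> 0 <= k%:E * maxe x 0.
  by move=> k0; rewrite mule_ge0 // lee_fin ltW.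
have ge0_neqNy (x : \bar R) : 0 <= x -> x != -oo by case: x.
case: a => [a| |] // _; last first.
  rewrite /= maxye gt0_muley ?lte_fin // addye; last exact/ge0_neqNy/scale_ge0.
  by rewrite addey ?leey // ge0_neqNy.
case: b => [b| |] // _; last first.
  rewrite /= maxye gt0_muley ?lte_fin // addey; last exact/ge0_neqNy/scale_ge0.
  by rewrite addey ?leey // ge0_neqNy.
case: c => [c| |] // _ abc.
rewrite -!EFinN -!EFin_max -!EFinM -!EFinD !lee_fin.
by apply: le_mix_posnegr; rewrite // -lee_fin EFinD !EFinM.
Qed.

Lemma le_mix_sube (t : R) (P1 P2 P3 N1 N2 N3 : \bar R) : (0 < t < 1)%R ->
  0 <= P1 -> 0 <= P2 -> 0 <= P3 -> 0 <= N1 -> 0 <= N2 -> 0 <= N3 ->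
  N3 <= t%:E * N1 + (1 - t)%:E * N2 ->
  t%:E * P1 + (1 - t)%:E * P2 + N3 <= P3 + (t%:E * N1 + (1 - t)%:E * N2) ->
  t%:E * (P1 - N1) + (1 - t)%:E * (P2 - N2) <= P3 - N3.
Proof.
move=> /andP[t0 t1] P1g P2g P3g N1g N2g N3g hN hP.
have t1' : (0 < 1 - t)%R by rewrite subr_gt0.
case: N1 N1g hN hP => [n1| |] // _ hN hP; last first.
  by rewrite addeNy gt0_muleNy ?lte_fin // addNye leNye.
case: N2 N2g hN hP => [n2| |] // _ hN hP; last first.
  by rewrite addeNy gt0_muleNy ?lte_fin // addeNy leNye.
rewrite -!EFinM -EFinD in hN hP *.
case: N3 N3g hN hP => [n3| |] // _ hN hP.
case: P3 P3g hP => [p3| |] // _ hP; last by rewrite addye // leey.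
case: P1 P1g hP => [p1| |] // _ hP; case: P2 P2g hP => [p2| |] // _ hP; last 3 first.
- by move: hP; rewrite gt0_muley ?lte_fin // !addey // leye_eq.
- by move: hP; rewrite gt0_muley ?lte_fin // !addye // leye_eq.
- by move: hP; rewrite !gt0_muley ?lte_fin // !addye // leye_eq.
rewrite -!EFinM -!EFinD !lee_fin in hN hP; rewrite -!EFinB -!EFinM -!EFinD lee_fin.
lra.
Qed.

End convex_combination_posneg.

Section integral_on_conull_set.
Local Open Scope ereal_scope.
Context d (T : measurableType d) (R : realType) (mu : {measure set T -> \bar R}).
Import HBNNSimple.

Lemma ge0_le_integralT (f g : T -> \bar R) : (forall x, 0 <= f x) ->
  (forall x, f x <= g x) -> \int[mu]_x f x <= \int[mu]_x g x.
Proof.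
move=> f0 fg; rewrite !ge0_integralTE //; last by move=> x; exact: le_trans (fg x).
apply: ereal_sup_le => _ [h hf <-]; exists h => //= x; exact: le_trans (hf x) _.
Qed.

Lemma ge0_integral_conull (D : set T) (f : T -> \bar R) :
  measurable D -> mu (~` D) = 0 -> (forall x, 0 <= f x) ->
  \int[mu]_x f x = \int[mu]_(x in D) f x.
Proof.
move=> mD muDC0 f0; apply/eqP; rewrite eq_le; apply/andP; split; last first.
  by rewrite integral_mkcond; apply: ge0_le_integralT => x; rewrite /patch; case: ifP.
rewrite [leLHS]ge0_integralTE //; apply: ge_ereal_sup => _ [s sf <-].
have ms : measurable_fun setT (EFin \o s).
  by apply/measurable_EFinP; exact: measurable_funP.
rewrite -integralT_nnsfun -(setUv D) ge0_integral_setU //; first last.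
all: first [exact: measurableC | by rewrite setUv | by move=> x _; rewrite lee_fin
           | by rewrite /disj_set setICr | idtac].
rewrite [X in _ + X]null_set_integral //; [|exact: measurableC|exact: measurable_funS ms].
rewrite adde0 !(integral_mkcond D); apply: ge0_le_integralT => x; rewrite /patch.
  by case: ifP => // _; rewrite lee_fin.
by case: ifP => // _; exact: sf.
Qed.

Lemma integral_conull (D : set T) (f : T -> \bar R) : measurable D -> mu (~` D) = 0 ->
  \int[mu]_x f x = \int[mu]_(x in D) f x.
Proof.
by move=> mD muDC0; rewrite integralE [RHS]integralE !(@ge0_integral_conull D).
Qed.

Lemma ge0_integral_comb (D : set T) (k l : R) (u v : T -> \bar R) :
  measurable D -> (0 <= k)%R -> (0 <= l)%R ->
  (forall x, D x -> 0 <= u x) -> (forall x, D x -> 0 <= v x) ->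
  measurable_fun D u -> measurable_fun D v ->
  \int[mu]_(x in D) (k%:E * u x + l%:E * v x) =
    k%:E * \int[mu]_(x in D) u x + l%:E * \int[mu]_(x in D) v x.
Proof.
move=> mD k0 l0 u0 v0 mu_ mv.
rewrite ge0_integralD //; first by rewrite !ge0_integralZl_EFin.
- by move=> x Dx; rewrite mule_ge0 ?lee_fin ?u0.
- exact: emeasurable_funM.
- by move=> x Dx; rewrite mule_ge0 ?lee_fin ?v0.
- exact: emeasurable_funM.
Qed.

Lemma le_integral_mix (D : set T) (t : R) (g1 g2 g3 : T -> \bar R) :
  measurable D -> mu (~` D) = 0 -> (0 < t < 1)%R ->
  measurable_fun D g1 -> measurable_fun D g2 -> measurable_fun D g3 ->
  (forall x, D x -> [/\ g1 x != +oo, g2 x != +oo, g3 x != +oo &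
     t%:E * g1 x + (1 - t)%:E * g2 x <= g3 x]) ->
  t%:E * \int[mu]_x g1 x + (1 - t)%:E * \int[mu]_x g2 x <= \int[mu]_x g3 x.
Proof.
move=> mD muDC0 ht m1 m2 m3 g123; have /andP[t0 t1] := ht.
have t1' : (0 <= 1 - t)%R by rewrite subr_ge0 ltW.
set N := fun x => t%:E * g1^\- x + (1 - t)%:E * g2^\- x.
set P := fun x => t%:E * g1^\+ x + (1 - t)%:E * g2^\+ x.
have intN : \int[mu]_(x in D) N x =
    t%:E * \int[mu]_(x in D) g1^\- x + (1 - t)%:E * \int[mu]_(x in D) g2^\- x.
  by apply: ge0_integral_comb => //; [exact: ltW | exact: measurable_funeneg ..].
have intP : \int[mu]_(x in D) P x =
    t%:E * \int[mu]_(x in D) g1^\+ x + (1 - t)%:E * \int[mu]_(x in D) g2^\+ x.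
  by apply: ge0_integral_comb => //; [exact: ltW | exact: measurable_funepos ..].
have N0 x : D x -> 0 <= N x.
  by move=> _; rewrite adde_ge0 // mule_ge0 // lee_fin ltW.
have P0 x : D x -> 0 <= P x.
  by move=> _; rewrite adde_ge0 // mule_ge0 // lee_fin ltW.
have mN : measurable_fun D N.
  by apply: emeasurable_funD; apply: emeasurable_funM => //; exact: measurable_funeneg.
have mP : measurable_fun D P.
  by apply: emeasurable_funD; apply: emeasurable_funM => //; exact: measurable_funepos.
have g3N0 x : D x -> 0 <= g3^\- x by [].
have g3P0 x : D x -> 0 <= g3^\+ x by [].
have mg3N := measurable_funeneg m3; have mg3P := measurable_funepos m3.
rewrite (integral_conull g1 mD muDC0) (integral_conull g2 mD muDC0).
rewrite (integral_conull g3 mD muDC0).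
rewrite (integralE _ D g1) (integralE _ D g2) (integralE _ D g3).
apply: le_mix_sube => //; try by apply: integral_ge0.
- rewrite -intN; apply: ge0_le_integral => // x Dx.
  have [n1 n2 n3 g] := g123 x Dx.
  by rewrite /N !funenegE; case: (le_mix_posneg ht n1 n2 n3 g).
- rewrite -intP -intN -!ge0_integralD //; apply: ge0_le_integral => //.
  + by move=> x Dx; rewrite adde_ge0 ?P0.
  + exact: emeasurable_funD.
  + exact: emeasurable_funD.
  move=> x Dx; have [n1 n2 n3 g] := g123 x Dx.
  by rewrite /N /P !funenegE !funeposE; case: (le_mix_posneg ht n1 n2 n3 g).
Qed.

End integral_on_conull_set.

Section relative_entropy_term.
Context (R : realType).

Definition relentr (a p : R) : R := a * ln (a / p).

Lemma relentr0 (p : R) : relentr 0 p = 0.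
Proof. exact: mul0r. Qed.

Lemma relentrp0 (a : R) : relentr a 0 = 0.
Proof. by rewrite /relentr invr0 mulr0 ln0 // mulr0. Qed.

Lemma relentr_tangent (p m x : R) : 0 < p -> 0 < m -> 0 <= x ->
  relentr m p + (ln (m / p) + 1) * (x - m) <= relentr x p.
Proof.
move=> p0 m0 x0; rewrite /relentr.
have [->|xn0] := eqVneq x 0; first by rewrite mul0r; nra.
have xp : 0 < x by rewrite lt0r xn0.
have ln_mx : x * ln (m / x) <= m - x.
  have -> : m - x = x * (m / x - 1) by field; rewrite lt0r_neq0.
  rewrite ler_pM2l //.
  have := @le_ln1Dx R (m / x - 1); rewrite (_ : 1 + (m / x - 1) = m / x); last by ring.
  by apply; have := divr_gt0 m0 xp; lra.
have -> : ln (x / p) = ln (m / p) - ln (m / x) by rewrite !ln_div ?posrE //; ring.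
nra.
Qed.

Lemma relentr_convex (p a b g : R) : 0 <= p -> 0 <= a -> 0 <= b -> 0 <= g <= 1 ->
  relentr (g * a + (1 - g) * b) p <= g * relentr a p + (1 - g) * relentr b p.
Proof.
move=> p0 a0 b0 /andP[g0 g1]; have g1' : 0 <= 1 - g by rewrite subr_ge0.
(* For [p = 0] all terms vanish, the library setting [ln 0 = 0]. *)
have [->|pn0] := eqVneq p 0; first by rewrite !relentrp0; lra.
have {pn0}p_gt0 : 0 < p by rewrite lt0r pn0.
set m := g * a + (1 - g) * b.
have [m0|mn0] := eqVneq m 0.
  have /andP[ga gb] : (g * a == 0) && ((1 - g) * b == 0).
    by rewrite -paddr_eq0 ?mulr_ge0 // -/m m0.
  move: ga gb; rewrite m0 relentr0 !mulf_eq0.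
  by move=> /orP[] /eqP-> /orP[] /eqP->; rewrite ?relentr0; lra.
have m0 : 0 < m by rewrite lt0r mn0 addr_ge0 ?mulr_ge0.
have ha := relentr_tangent p_gt0 m0 a0; have hb := relentr_tangent p_gt0 m0 b0.
have -> : relentr m p = g * (relentr m p + (ln (m / p) + 1) * (a - m)) +
    (1 - g) * (relentr m p + (ln (m / p) + 1) * (b - m)) by rewrite /m; ring.
by rewrite lerD // ler_wpM2l.
Qed.

End relative_entropy_term.

Section mixture_weight.
Context (R : realType).

Definition mixw (t phi1 phi2 : R) : R := t * phi1 / (t * phi1 + (1 - t) * phi2).

Variables (t phi1 phi2 : R).
Hypotheses (t01 : 0 < t < 1) (phi1_ge0 : 0 <= phi1) (phi2_ge0 : 0 <= phi2).
Local Notation phi3 := (t * phi1 + (1 - t) * phi2).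
Local Notation g := (mixw t phi1 phi2).

Let t_ge0 : 0 <= t. Proof. by case/andP: t01 => /ltW. Qed.
Let t1_ge0 : 0 <= 1 - t. Proof. by case/andP: t01 => _ /ltW; rewrite subr_ge0. Qed.

Lemma mixw_itv : 0 <= g <= 1.
Proof.
rewrite /mixw; have [->|phi3_neq0] := eqVneq phi3 0; first by rewrite invr0 mulr0 lexx ler01.
have phi3_gt0 : 0 < phi3 by rewrite lt0r phi3_neq0 addr_ge0 ?mulr_ge0.
apply/andP; split; first by rewrite divr_ge0 ?mulr_ge0 // ltW.
by rewrite ler_pdivrMr // mul1r lerDl mulr_ge0.
Qed.

Lemma mixw_itvoo : 0 < phi1 -> 0 < phi2 -> 0 < g < 1.
Proof.
move=> phi1_gt0 phi2_gt0; have /andP[t0 t1] := t01.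
have phi3_gt0 : 0 < phi3 by rewrite addr_gt0 ?mulr_gt0 // subr_gt0.
apply/andP; split; first by rewrite divr_gt0 ?mulr_gt0.
by rewrite /mixw ltr_pdivrMr // mul1r ltrDl mulr_gt0 // subr_gt0.
Qed.

Lemma mix_mass (x y : R) : phi3 * (g * x + (1 - g) * y) = t * phi1 * x + (1 - t) * phi2 * y.
Proof.
rewrite /mixw; have [phi3_0|phi3_neq0] := eqVneq phi3 0; last by field.
have /andP[/eqP-> /eqP->] : (t * phi1 == 0) && ((1 - t) * phi2 == 0).
  by rewrite -paddr_eq0 ?mulr_ge0 // phi3_0.
by rewrite !(mul0r, add0r).
Qed.

Lemma mix_relentr_le (p c a1 a2 : R) : 0 <= p -> 0 <= a1 -> 0 <= a2 ->
  t * ((a1 * c - relentr a1 p) * phi1) + (1 - t) * ((a2 * c - relentr a2 p) * phi2) <=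
  ((g * a1 + (1 - g) * a2) * c - relentr (g * a1 + (1 - g) * a2) p) * phi3.
Proof.
move=> p0 a1_ge0 a2_ge0.
have phi3_ge0 : 0 <= phi3 by rewrite addr_ge0 ?mulr_ge0.
have convex := ler_wpM2l phi3_ge0 (relentr_convex p0 a1_ge0 a2_ge0 mixw_itv).
rewrite mix_mass in convex.
have := mix_mass (a1 * c) (a2 * c).
nra.
Qed.

End mixture_weight.

Section entropy_density.
Context (R : realType) (I : finType).
Implicit Types (a p c : I -> R) (phi : R).

Definition abs_cont a p : bool := [forall z, (p z == 0) ==> (a z == 0)].

Definition Hdensityr a p c phi : R :=
  (\sum_(z : I) (a z * c z - relentr (a z) (p z))) * phi.

(* [Hf P f pih phi] is [\int[P]_w Hdensity (pih w) (w 0) (f w) (phi w)] by conversion. *)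
Definition Hdensity a p c phi : \bar R :=
  ((\sum_(z : I) ((a z * c z)%:E - relent (a z) (p z))) * phi%:E)%E.

Lemma relentE (a p : R) :
  relent a p = if (a != 0) && (p == 0) then +oo%E else (relentr a p)%:E.
Proof. by rewrite /relent /relentr; case: eqP => [->|]; rewrite ?mul0r //; case: ifP. Qed.

Lemma Hdensity_abs_cont a p c phi :
  abs_cont a p -> Hdensity a p c phi = (Hdensityr a p c phi)%:E.
Proof.
move=> /forallP ap; rewrite /Hdensity /Hdensityr EFinM -sumEFin; congr (_ * _)%E.
apply: eq_bigr => z _; rewrite relentE EFinB.
by have := ap z; case: (p z == 0); case: (a z == 0).
Qed.

Lemma Hdensity_singular a p c phi :
  ~~ abs_cont a p -> 0 < phi -> Hdensity a p c phi = -oo%E.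
Proof.
move=> /forallPn[z]; rewrite negb_imply => /andP[pz az] phi_gt0.
rewrite /Hdensity (bigD1 z) //= relentE az pz /= addeNy addNye.
by rewrite gt0_mulNye ?lte_fin.
Qed.

Lemma Hdensity_neqy a p c phi : 0 <= phi -> Hdensity a p c phi != +oo%E.
Proof.
move=> phi_ge0; have [ap|nap] := boolP (abs_cont a p); first by rewrite Hdensity_abs_cont.
have [->|phi_neq0] := eqVneq phi 0; first by rewrite /Hdensity mule0.
by rewrite Hdensity_singular // lt0r phi_neq0.
Qed.

Lemma Hdensity0 a p c : Hdensity a p c 0 = 0%E.
Proof. exact: mule0. Qed.

Lemma HdensityZ a p c phi k : 0 <= k ->
  Hdensity a p c (k * phi) = (k%:E * Hdensity a p c phi)%E.
Proof. by move=> k0; rewrite /Hdensity EFinM muleCA. Qed.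

Lemma abs_cont_mix a1 a2 p g : 0 < g < 1 ->
  (forall z, 0 <= a1 z) -> (forall z, 0 <= a2 z) ->
  abs_cont (fun z => g * a1 z + (1 - g) * a2 z) p = abs_cont a1 p && abs_cont a2 p.
Proof.
move=> /andP[g0 g1] a1_ge0 a2_ge0.
have g1' : 0 < 1 - g by rewrite subr_gt0.
have a_eq0 z : (g * a1 z + (1 - g) * a2 z == 0) = (a1 z == 0) && (a2 z == 0).
  rewrite paddr_eq0 ?mulr_ge0 ?a1_ge0 ?a2_ge0 ?(ltW g0) ?(ltW g1') //.
  by rewrite !mulf_eq0 (gt_eqF g0) (gt_eqF g1').
apply/idP/idP => [/forallP ap|/andP[/forallP ap1 /forallP ap2]].
  apply/andP; split; apply/forallP => z; move: (ap z); rewrite a_eq0;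
    by case: (p z == 0) => //= /andP[].
by apply/forallP => z; rewrite a_eq0; move: (ap1 z) (ap2 z); case: (p z == 0) => //= -> ->.
Qed.

Section mixture.
Variables (t phi1 phi2 : R).
Hypotheses (t01 : 0 < t < 1) (phi1_ge0 : 0 <= phi1) (phi2_ge0 : 0 <= phi2).
Local Notation phi3 := (t * phi1 + (1 - t) * phi2).
Local Notation g := (mixw t phi1 phi2).

Lemma Hdensityr_mix p c a1 a2 : (forall z, 0 <= p z) ->
  (forall z, 0 <= a1 z) -> (forall z, 0 <= a2 z) ->
  t * Hdensityr a1 p c phi1 + (1 - t) * Hdensityr a2 p c phi2 <=
  Hdensityr (fun z => g * a1 z + (1 - g) * a2 z) p c phi3.
Proof.
move=> p_ge0 a1_ge0 a2_ge0; rewrite /Hdensityr !mulr_suml !mulr_sumr -big_split /=.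
by apply: ler_sum => z _; exact: mix_relentr_le.
Qed.

Lemma Hdensity_mix p c a1 a2 : (forall z, 0 <= p z) ->
  (forall z, 0 <= a1 z) -> (forall z, 0 <= a2 z) ->
  (t%:E * Hdensity a1 p c phi1 + (1 - t)%:E * Hdensity a2 p c phi2 <=
   Hdensity (fun z => g * a1 z + (1 - g) * a2 z)%R p c phi3)%E.
Proof.
move=> p_ge0 a1_ge0 a2_ge0; have /andP[t0 t1] := t01.
have t1' : 0 < 1 - t by rewrite subr_gt0.
have [t_ge0 t1_ge0] := (ltW t0, ltW t1').
have [phi1_0|phi1_neq0] := eqVneq phi1 0.
  have -> : g = 0 by rewrite /mixw phi1_0 mulr0 mul0r.
  rewrite (_ : (fun z => _) = a2); last by apply/funext => z; rewrite mul0r add0r subr0 mul1r.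
  by rewrite phi1_0 mulr0 add0r HdensityZ // Hdensity0 mule0 add0e lexx.
have [phi2_0|phi2_neq0] := eqVneq phi2 0.
  have -> : g = 1 by rewrite /mixw phi2_0 mulr0 addr0 divff // mulf_neq0 // lt0r_neq0.
  rewrite (_ : (fun z => _) = a1); last by apply/funext => z; rewrite subrr mul0r addr0 mul1r.
  by rewrite phi2_0 mulr0 addr0 HdensityZ // Hdensity0 mule0 adde0 lexx.
have phi1_gt0 : 0 < phi1 by rewrite lt0r phi1_neq0.
have phi2_gt0 : 0 < phi2 by rewrite lt0r phi2_neq0.
have ny1 : (t%:E * Hdensity a1 p c phi1 != +oo)%E.
  by rewrite -HdensityZ ?Hdensity_neqy ?mulr_ge0.
have ny2 : ((1 - t)%:E * Hdensity a2 p c phi2 != +oo)%E.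
  by rewrite -HdensityZ ?Hdensity_neqy ?mulr_ge0.
have [ap1|nap1] := boolP (abs_cont a1 p); last first.
  by rewrite Hdensity_singular // gt0_muleNy ?lte_fin // addNye // leNye.
have [ap2|nap2] := boolP (abs_cont a2 p); last first.
  by rewrite (Hdensity_singular _ nap2) // gt0_muleNy ?lte_fin // addeNy // leNye.
have ap3 : abs_cont (fun z => g * a1 z + (1 - g) * a2 z) p.
  by rewrite abs_cont_mix ?ap1 ?mixw_itvoo.
rewrite !Hdensity_abs_cont // -!EFinM -EFinD lee_fin.
exact: Hdensityr_mix.
Qed.

End mixture.
End entropy_density.

Section measurable_entropy.
Context (R : realType).

Lemma measurable_invr : measurable_fun [set: R] (fun x : R => x^-1).
Proof.
rewrite (_ : (fun x : R => x^-1) = (fun x => if x == 0 then 0 else x^-1)); last first.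
  by apply/funext => x; case: eqP => // ->; rewrite invr0.
apply: measurable_fun_if => //.
  by apply: (@measurable_fun_eqr _ _ _ _ id (cst 0)) => //; exact: measurable_cst.
rewrite (_ : _ `&` _ = [set x : R | x != 0]); last first.
  by apply/seteqP; split => x /=; [case => _ /negbT | move=> x0; split => //; apply/negbTE].
apply: open_continuous_measurable_fun; first exact: open_neq.
by move=> x; rewrite inE /= => x0; exact: inv_continuous.
Qed.

Context d (T : measurableType d).

Lemma measurable_relent (D : set T) (a p : T -> R) : measurable D ->
  measurable_fun D a -> measurable_fun D p ->
  measurable_fun D (fun w => relent (a w) (p w)).
Proof.
move=> mD ma mp; under eq_fun do rewrite relentE.
have eq0 (u : T -> R) : measurable_fun D u -> measurable_fun D (fun w => u w == 0).
  by move=> mu; apply: measurable_fun_eqr => //; exact: measurable_cst.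
apply: measurable_fun_if => //.
  by apply: measurable_and; [apply: measurable_neg|]; exact: eq0.
apply: (measurable_funS mD (@subIsetl _ _ _)); apply/measurable_EFinP.
apply: measurable_funM => //; apply: measurableT_comp; first exact: measurable_ln.
by apply: measurable_funM => //; exact: measurableT_comp measurable_invr mp.
Qed.

Lemma measurable_Hdensity (I : finType) (D : set T) (a p c : T -> I -> R) (phi : T -> R) :
  measurable D ->
  (forall z, measurable_fun D (fun w => a w z)) ->
  (forall z, measurable_fun D (fun w => p w z)) ->
  (forall z, measurable_fun D (fun w => c w z)) ->
  measurable_fun D phi ->
  measurable_fun D (fun w => Hdensity (a w) (p w) (c w) (phi w)).
Proof.
move=> mD ma mp mc mphi; apply: emeasurable_funM; last exact/measurable_EFinP.
apply: emeasurable_sum => z; apply: emeasurable_funB; last exact: measurable_relent.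
by apply/measurable_EFinP; exact: measurable_funM.
Qed.

End measurable_entropy.

Section environment_space.
Context (R : realType) (d B : nat).
Local Notation E := (envT R d B).
Local Notation Env := (env R d B).

Lemma closed_measurable_env (U : set E) : closed U -> measurable (U : set Env).
Proof.
move=> cU; rewrite -(setCK U); apply: measurableC; apply: sub_sigma_algebra.
exact: closed_openC.
Qed.

Lemma continuous_measurable_env (D : set E) (g : E -> R) : measurable (D : set Env) ->
  {within D, continuous g} -> measurable_fun (D : set Env) (g : Env -> R).
Proof.
move=> mD /continuousP cg.
apply: (measurability _ (RGenOpens.measurableE R)) => _ [_ [a [b ->] <-]].
have /open_subspaceP [V oV VD] : open (g @^-1` `]a, b[ : set (subspace D)).
  by apply: cg; exact: interval_open.
by rewrite setIC -VD; apply: measurableI => //; exact: sub_sigma_algebra.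
Qed.

Lemma continuous_eval_env (x : 'rV[int]_d) (z : step d B) : continuous (fun w : E => w x z).
Proof.
by move=> w; apply: continuous_comp (@proj_continuous _ _ x w) (@proj_continuous _ _ z _).
Qed.

Lemma closed_OmegaSet : closed (@OmegaSet R d B : set E).
Proof.
have -> : @OmegaSet R d B = \bigcap_(x in setT)
    ((\bigcap_(z in setT) (fun w : E => w x z) @^-1` [set r : R | 0 <= r]) `&`
     ((fun w : E => \sum_(z : step d B) w x z) @^-1` [set 1])).
  apply/seteqP; split => w /=.
    by move=> Ow x _; have [w0 w1] := Ow x; split => // z _; exact: w0.
  by move=> Ow x; have [w0 w1] := Ow x I; split => // z; exact: w0.
apply: closed_bigI => x _; apply: closedI.
  apply: closed_bigI => z _; apply: preimage_closed; last exact: closed_ge.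
  by move=> w _; exact: continuous_eval_env.
apply: preimage_closed; last exact: closed_eq.
move=> w _; apply: continuous_big => [|z _]; last exact: continuous_eval_env.
exact: add_continuous.
Qed.

Lemma measurable_OmegaSet : measurable (@OmegaSet R d B).
Proof. exact: (closed_measurable_env closed_OmegaSet). Qed.

Lemma measurable_eval_env (x : 'rV[int]_d) (z : step d B) :
  measurable_fun [set: env R d B] (fun w => w x z).
Proof.
apply: continuous_measurable_env => //.
by apply: continuous_subspaceT => w; exact: continuous_eval_env.
Qed.

End environment_space.

Section mixture_of_invariant_pairs.
Context (R : realType) (d B : nat) (P : probability (env R d B) R).
Variables (t : R) (pih1 pih2 : env R d B -> step d B -> R) (phi1 phi2 : env R d B -> R).
Hypotheses (t01 : 0 < t < 1) (hk1 : env_kernel P pih1) (hk2 : env_kernel P pih2)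
  (hp1 : prob_density P phi1) (hp2 : prob_density P phi2).

Definition mix_density (w : env R d B) : R := t * phi1 w + (1 - t) * phi2 w.

Definition mix_kernel (w : env R d B) (z : step d B) : R :=
  mixw t (phi1 w) (phi2 w) * pih1 w z + (1 - mixw t (phi1 w) (phi2 w)) * pih2 w z.

Let phi1_ge0 w : 0 <= phi1 w. Proof. by case: hp1. Qed.
Let phi2_ge0 w : 0 <= phi2 w. Proof. by case: hp2. Qed.
Let pih1_ge0 w z : 0 <= pih1 w z. Proof. by case: hk1. Qed.
Let pih2_ge0 w z : 0 <= pih2 w z. Proof. by case: hk2. Qed.
Let mphi1 : measurable_fun setT phi1. Proof. by case: hp1. Qed.
Let mphi2 : measurable_fun setT phi2. Proof. by case: hp2. Qed.
Let mpih1 z : measurable_fun setT (fun w => pih1 w z). Proof. by case: hk1. Qed.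
Let mpih2 z : measurable_fun setT (fun w => pih2 w z). Proof. by case: hk2. Qed.

Lemma mix_density_ge0 w : 0 <= mix_density w.
Proof.
have /andP[t0 t1] := t01.
by rewrite addr_ge0 // mulr_ge0 // ltW // subr_gt0.
Qed.

Lemma mix_density_kernelE w z : mix_density w * mix_kernel w z =
  t * (phi1 w * pih1 w z) + (1 - t) * (phi2 w * pih2 w z).
Proof. by rewrite /mix_density /mix_kernel mix_mass // !mulrA. Qed.

Lemma measurable_mix_density : measurable_fun setT mix_density.
Proof. by apply: measurable_funD; apply: measurable_funM => //; exact: measurable_cst. Qed.

Lemma measurable_mix_kernel z : measurable_fun setT (fun w => mix_kernel w z).
Proof.
have mg : measurable_fun setT (fun w => mixw t (phi1 w) (phi2 w)).
  apply: measurable_funM; first by apply: measurable_funM => //; exact: measurable_cst.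
  by apply: measurableT_comp; [exact: measurable_invr | exact: measurable_mix_density].
apply: measurable_funD; apply: measurable_funM => //.
by apply: measurable_funB => //; exact: measurable_cst.
Qed.

Lemma mix_env_kernel : env_kernel P mix_kernel.
Proof.
split; first exact: measurable_mix_kernel.
- move=> w z; have /andP[g0 g1] := mixw_itv t01 (phi1_ge0 w) (phi2_ge0 w).
  by rewrite addr_ge0 // mulr_ge0 // subr_ge0.
- case: hk1 => _ _; case: hk2 => _ _; apply: filterS2 => w sum2 sum1.
  by rewrite big_split /= -!mulr_sumr sum1 sum2 mulr1 mulr1 subrKC.
Qed.

Lemma mix_prob_density : prob_density P mix_density.
Proof.
have /andP[t0 t1] := t01; have t1' : 0 <= 1 - t by rewrite subr_ge0 ltW.
split; [exact: measurable_mix_density | exact: mix_density_ge0 |].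
case: hp1 => _ _ int1; case: hp2 => _ _ int2.
under eq_integral do rewrite EFinD !EFinM.
rewrite ge0_integral_comb //; first by rewrite int1 int2 !mule1 -EFinD subrKC.
- exact: ltW.
- by move=> w _; rewrite lee_fin.
- by move=> w _; rewrite lee_fin.
- exact/measurable_EFinP.
- exact/measurable_EFinP.
Qed.

Lemma mix_invariant : pihat_invariant P pih1 phi1 -> pihat_invariant P pih2 phi2 ->
  pihat_invariant P mix_kernel mix_density.
Proof.
move=> hi1 hi2; apply: filterS2 hi1 hi2 => w inv1 inv2.
under eq_bigr do rewrite mix_density_kernelE.
by rewrite big_split /= -!mulr_sumr -inv1 -inv2.
Qed.

Lemma mix_Hf_ge (f : env R d B -> step d B -> R) :
  P (@OmegaSet R d B) = 1%E -> Cb f ->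
  (t%:E * Hf P f pih1 phi1 + (1 - t)%:E * Hf P f pih2 phi2 <=
   Hf P f mix_kernel mix_density)%E.
Proof.
move=> POmega hf; have mOmega := @measurable_OmegaSet R d B.
have POmegaC : P (~` @OmegaSet R d B) = 0%E.
  by rewrite probability_setC // POmega subee.
have mH (pih : env R d B -> step d B -> R) (phi : env R d B -> R) :
    (forall z, measurable_fun setT (fun w => pih w z)) -> measurable_fun setT phi ->
    measurable_fun (@OmegaSet R d B)
      (fun w => Hdensity (pih w) (fun z => w 0 z) (f w) (phi w)).
  move=> mpih mphi; apply: measurable_Hdensity => // [z|z|z|].
  - exact: measurable_funS (mpih z).
  - exact: measurable_funS (measurable_eval_env 0 z).
  - exact: continuous_measurable_env (hf z).1.
  - exact: measurable_funS mphi.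
apply: (le_integral_mix mOmega POmegaC t01 (mH _ _ mpih1 mphi1) (mH _ _ mpih2 mphi2)
  (mH _ _ measurable_mix_kernel measurable_mix_density)) => w Omega_w.
split; [exact: Hdensity_neqy | exact: Hdensity_neqy |
        exact: Hdensity_neqy (mix_density_ge0 w) |].
apply: Hdensity_mix => //; exact: (Omega_w 0).1.
Qed.

End mixture_of_invariant_pairs.

Unset Implicit Arguments.

Theorem lemma2p2 (R : realType) (d B : nat) (hd : (1 <= d)%N) (hB : (1 <= B)%N)
  (P : probability (env R d B) R)
  (hOmega : P (@OmegaSet R d B) = 1%E)
  (hstat : stationary P) (herg : ergodic P)
  (f : env R d B -> step d B -> R) (hf : Cb f)
  (t : R) (ht : 0 < t < 1)
  (pih1 pih2 : env R d B -> step d B -> R) (phi1 phi2 : env R d B -> R)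
  (hk1 : env_kernel P pih1) (hp1 : prob_density P phi1) (hi1 : pihat_invariant P pih1 phi1)
  (hk2 : env_kernel P pih2) (hp2 : prob_density P phi2) (hi2 : pihat_invariant P pih2 phi2) :
  let phi3 := fun w => t * phi1 w + (1 - t) * phi2 w in
  let gamma := fun w => t * phi1 w / phi3 w in
  let pih3 := fun w z => gamma w * pih1 w z + (1 - gamma w) * pih2 w z in
  [/\ env_kernel P pih3, prob_density P phi3, pihat_invariant P pih3 phi3 &
      (t%:E * Hf P f pih1 phi1 + (1 - t)%:E * Hf P f pih2 phi2
         <= Hf P f pih3 phi3)%E].
Proof.
split.
- exact: mix_env_kernel.
- exact: mix_prob_density.
- exact: mix_invariant.
- exact: mix_Hf_ge.
Qed.
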